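(* Let $P=\forall x_1,\dots,x_n\,\exists y_1(D_1),\dots,y_k(D_k)$ be a prefix, let $G_{\mathrm{syn}}$ be an admissible group w.r.t. $P$, and let $g\in G_{\mathrm{syn}}$. If $j\in\{1,\dots,k\}$ and $\sigma\in\mathcal A(X)$ are such that $[x]_\sigma=[g(x)]_\sigma$ for all $x\in D_j$ and $g(y_j)\in\operatorname{BF}(\{y_l\mid D_j=D_l\})$, then $[g(y_j)]_{\sigma_s}=[y_j]_{\sigma_{g(s)}}$ for all $s\in\mathcal S(P)$.
   Context: $X=\{x_1,\dots,x_n\}$, $Y=\{y_1,\dots,y_k\}$ are finite disjoint sets of propositional variables; $\operatorname{BF}(V)$ the propositional formulas over $V\subseteq X\cup Y$; $\mathcal A(V)$ the assignments $V\to\{\top,\bot\}$; $[\phi]_\sigma$ the truth value; $D_j\subseteq X$. An interpretation is $s=(s_1,\dots,s_k)$ with $s_j:\{\top,\bot\}^{|D_j|}\to\{\top,\bot\}$; $\mathcal S(P)$ the set of interpretations. For $\sigma\in\mathcal A(X)$, $\sigma_s\in\mathcal A(X\cup Y)$ equals $\sigma$ on $X$ and $\sigma_s(y_j)=s_j$ evaluated at $\sigma$'s values on $D_j$. For $g:\operatorname{BF}(V)\to\operatorname{BF}(V)$ and $\rho\in\mathcal A(V)$, $g(\rho)(v)=[g(v)]_\rho$; $g$ preserves propositional satisfiability if $[g(\phi)]_\rho=[\phi]_{g(\rho)}$ always. A formula in $\operatorname{BF}(Y)$ depends on $x_i$ if it contains some $y_j$ with $x_i\in D_j$. A bijection $g$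 of $\operatorname{BF}(X\cup Y)$ is admissible w.r.t. $P$ if it preserves propositional satisfiability, $g(x_i)\in\operatorname{BF}(X)$, $g(y_j)\in\operatorname{BF}(Y)$, and if $g(y_j)$ depends on $x_i$ then $g^{-1}(x_i)\in\operatorname{BF}(D_j)$. An admissible group is a subgroup of all admissible functions. For admissible $g$ and $\sigma\in\mathcal A(X)$, $g(\sigma)(x)=[g(x)]_\sigma$. For $g\in G_{\mathrm{syn}}$ and $s\in\mathcal S(P)$, $g(s)\in\mathcal S(P)$ is the (well-defined) interpretation $t$ with $\sigma_t=g(g^{-1}(\sigma)_s)$ for all $\sigma\in\mathcal A(X)$. *)

From mathcomp Require Import all_boot.
Set Implicit Arguments. Unset Strict Implicit. Unset Printing Implicit Defensive.

Inductive var (n k : nat) : Type :=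
| XV : 'I_n -> var n k
| YV : 'I_k -> var n k.
Arguments XV {n k}. Arguments YV {n k}.

Inductive form (V : Type) : Type :=
| FConst : bool -> form V
| FVar : V -> form V
| FNot : form V -> form V
| FAnd : form V -> form V -> form V
| FOr : form V -> form V -> form V.
Arguments FConst {V}. Arguments FVar {V}.

Fixpoint eval (V : Type) (rho : V -> bool) (f : form V) : bool :=
  match f with
  | FConst b => b
  | FVar v => rho v
  | FNot f1 => ~~ eval rho f1
  | FAnd f1 f2 => eval rho f1 && eval rho f2
  | FOr f1 f2 => eval rho f1 || eval rho f2
  end.

Fixpoint occurs (V : Type) (v : V) (f : form V) : Prop :=
  match f with
  | FConst _ => False
  | FVar w => w = v
  | FNot f1 => occurs v f1
  | FAnd f1 f2 | FOr f1 f2 => occurs v f1 \/ occurs v f2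
  end.

Definition inBF (V : Type) (W : V -> Prop) (f : form V) : Prop :=
  forall v, occurs v f -> W v.

Section Prefix.
Variables (n k : nat) (D : 'I_k -> {set 'I_n}).
Local Notation V := (var n k).
Local Notation F := (form V).

Definition isX (v : V) : Prop := if v is XV _ then True else False.
Definition isY (v : V) : Prop := if v is YV _ then True else False.
Definition inD (j : 'I_k) (v : V) : Prop :=
  if v is XV i then i \in D j else False.

Definition depends (f : F) (i : 'I_n) : Prop :=
  exists l, occurs (YV l) f /\ i \in D l.

Definition assign_act (g : F -> F) (rho : V -> bool) : V -> bool :=
  fun v => eval rho (g (FVar v)).

Definition preserves_sat (g : F -> F) : Prop :=
  forall (phi : F) (rho : V -> bool), eval rho (g phi) = eval (assign_act g rho) phi.

Definition admissible (g : F -> F) : Prop :=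
  [/\ bijective g, preserves_sat g,
      (forall i, inBF isX (g (FVar (XV i)))),
      (forall j, inBF isY (g (FVar (YV j)))) &
      (forall j i, depends (g (FVar (YV j))) i ->
         forall phi, g phi = FVar (XV i) -> inBF (inD j) phi)].

Record admissible_group (G : (F -> F) -> Prop) : Prop := {
  ag_adm : forall g, G g -> admissible g;
  ag_id : G id;
  ag_comp : forall g h, G g -> G h -> G (g \o h);
  ag_inv : forall g h, G g -> cancel g h -> cancel h g -> G h }.

Definition interp : Type :=
  forall j : 'I_k, ({x : 'I_n | x \in D j} -> bool) -> bool.

(* An assignment sigma ∈ A(X), viewed on all variables (Y-values irrelevant). *)
Definition extX (sigma : 'I_n -> bool) : V -> bool :=
  fun v => match v with XV x => sigma x | YV _ => false end.

Definition assignX_act (g : F -> F) (sigma : 'I_n -> bool) : 'I_n -> bool :=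
  fun x => eval (extX sigma) (g (FVar (XV x))).

Definition sigma_s (sigma : 'I_n -> bool) (s : interp) : V -> bool :=
  fun v => match v with
           | XV x => sigma x
           | YV j => s j (fun x : {x : 'I_n | x \in D j} => sigma (val x))
           end.

(* g(s): the interpretation t with sigma_t = g(g^{-1}(sigma)_s); its j-th
   component at a : D_j -> bool is [g(y_j)]_{g^{-1}(sigma)_s} for the
   extension sigma of a by false outside D_j (well-definedness is the paper's). *)
Definition interp_act (g ginv : F -> F) (s : interp) : interp :=
  fun j a =>
    let sa : 'I_n -> bool := fun x =>
      if (insub x : option {x : 'I_n | x \in D j}) is Some y then a y else false in
    eval (sigma_s (assignX_act ginv sa) s) (g (FVar (YV j))).

End Prefix.

From mathcomp Require Import all_boot.
From Stdlib Require Import FunctionalExtensionality.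

Set Implicit Arguments. Unset Strict Implicit. Unset Printing Implicit Defensive.

(* Admissibility puts g^-1(x_i) in BF(D_j) for every x_i on which g(y_j)
   depends.  Since g fixes sigma on D_j, so does g^-1; hence every y_l occurring
   in g(y_j) receives the same arguments from s at g^-1(sigma) as at sigma, and
   both sides evaluate g(y_j) under the same values. *)

Lemma eq_eval_occurs (V : Type) (r1 r2 : V -> bool) (f : form V) :
  (forall v, occurs v f -> r1 v = r2 v) -> eval r1 f = eval r2 f.
Proof.
elim: f => [b|v|f IH|f1 IH1 f2 IH2|f1 IH1 f2 IH2] /= r12 //.
- exact: r12.
- by rewrite IH.
- by rewrite IH1 ?IH2 // => v fv; apply: r12; tauto.
- by rewrite IH1 ?IH2 // => v fv; apply: r12; tauto.
Qed.

Section Prefix.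
Variables (n k : nat) (D : 'I_k -> {set 'I_n}).
Local Notation F := (form (var n k)).

Lemma eval_inD_eq (j : 'I_k) (r1 r2 : var n k -> bool) (phi : F) :
  (forall i, i \in D j -> r1 (XV i) = r2 (XV i)) -> inBF (inD D j) phi ->
  eval r1 phi = eval r2 phi.
Proof. by move=> r12 phiD; apply: eq_eval_occurs => -[i|l] /phiD //= /r12. Qed.

Lemma admissible_inv_inD (g ginv : F -> F) (j l : 'I_k) (i : 'I_n) :
  admissible D g -> cancel ginv g ->
  occurs (YV l) (g (FVar (YV j))) -> i \in D l ->
  inBF (inD D j) (ginv (FVar (XV i))).
Proof.
case=> _ _ _ _ gdep ginvK yl il.
by apply: (gdep j i); [exists l | rewrite ginvK].
Qed.

Lemma assignX_act_inv_fixed (g ginv : F -> F) (j : 'I_k) (sigma : 'I_n -> bool)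
    (i : 'I_n) :
  preserves_sat g -> cancel ginv g ->
  (forall x, x \in D j -> sigma x = assignX_act g sigma x) ->
  inBF (inD D j) (ginv (FVar (XV i))) ->
  assignX_act ginv sigma i = sigma i.
Proof.
move=> gsat ginvK gfix ginvD.
have := gsat (ginv (FVar (XV i))) (extX sigma); rewrite ginvK /= => ->.
by apply: eval_inD_eq ginvD => x /gfix.
Qed.

End Prefix.

Theorem lemma7 (n k : nat) (D : 'I_k -> {set 'I_n})
  (G : (form (var n k) -> form (var n k)) -> Prop) (HG : admissible_group D G)
  (g ginv : form (var n k) -> form (var n k))
  (Hg : G g) (Hgl : cancel g ginv) (Hgr : cancel ginv g)
  (j : 'I_k) (sigma : 'I_n -> bool)
  (Hsig : forall x, x \in D j -> sigma x = eval (extX sigma) (g (FVar (XV x))))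
  (Hgy : inBF (fun v => exists l, v = YV l /\ D l = D j) (g (FVar (YV j)))) :
  forall s : interp D,
    eval (sigma_s sigma s) (g (FVar (YV j))) =
    sigma_s sigma (interp_act g ginv s) (YV j).
Proof.
move=> s; have gadm := ag_adm HG Hg.
have [_ gsat _ _ _] := gadm.
apply: eq_eval_occurs => v yv; have [l [vl _]] := Hgy v yv; subst v.
congr (s l _); apply: functional_extensionality => -[i il] /=.
have ginvD := admissible_inv_inD gadm Hgr yv il.
rewrite -(assignX_act_inv_fixed gsat Hgr Hsig ginvD) /assignX_act.
apply: eval_inD_eq ginvD => x xj /=.
by case: insubP => [y _ /= ->|]; rewrite ?xj.
Qed.
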